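(* Let $G$ be a connected graph, let $\delta$ be a real with $0<\delta<3/2$, and let $T$ be a nice shortest $\delta$-tour in $G$ that stops at at least $3$ points. Then $G$ admits a vertex cover of size at most $\ell(T)/s_\delta+1$.
   Context: Continuous graph model: for a connected simple graph $G$, each edge $uv$ is viewed as a unit-length interval whose endpoints are the vertices $u,v$. $P(G)$ is the set of all points $p(u,v,\lambda)$ for $uv\in E(G)$, $\lambda\in[0,1]$, where $p(u,v,\lambda)=p(v,u,1-\lambda)$, $p(u,v,0)=u$, $p(u,v,1)=v$. A walk is a finite sequence of points $(p_0,\dots,p_z)$ in which any two consecutive points are distinct and lie on a common edge $uv$, say $p_{i-1}=p(u,v,\lambda)$, $p_i=p(u,v,\mu)$; this step has length $|\lambda-\mu|$ and covers all points of that edge between them. The length $\ell$ of a walk is the sum of the lengths of its steps; $d(p,q)$ is the minimum length of a walk from $p$ to $q$. A tour is a walk $T=(p_0,\dots,p_z)$ with $p_0=p_z$; the points $p_0,\dots,p_z$ are its stopping points, and the points of the tour are all points covered by its steps. For $\delta\ge 0$, a $\delta$-tour is a tour $T$ such that every $p\in P(G)$ has distance at most $\delta$ from some point of $T$; a shortest $\delta$-tour is one of minimum length. $T$ traverses an edge $uv$ if $(u,v)$ or $(v,u)$ occurs as a pair of consecutive stopping points. A tour $T=(p_0,\dots,p_z)$ with $z\ge 3$ is nice if: (a) for every $i\in[z]$, at least one of $p_{i-1},p_i$ is a vertex; (b) for every $i\in[z]$ with $p_i$ not a vertex, $p_{i-1}=p_{(i+1)\bmod z}$; (c) for every edge $uv$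 there is at most one $i\in[z]$ with $p_i=p(u,v,\lambda)$ for some $\lambda\in(0,1)$; (d) if $T$ traverses $uv$, there is no $i$ with $p_i=p(u,v,\lambda)$, $\lambda\in(0,1)$; (e) every edge is traversed at most twice by $T$. $S_\delta=\{0,\ \delta-\lfloor\delta\rfloor,\ \tfrac12+\delta-\lfloor\tfrac12+\delta\rfloor,\ 2\delta-\lfloor2\delta\rfloor\}$ and $s_\delta=\min\{|s_1-s_2| : \{s_i,1-s_i\}\cap S_\delta\ne\emptyset\text{ for } i=1,2,\ s_1\notin\{s_2,1-s_2\}\}$. *)

From Stdlib Require Import Reals.
From mathcomp Require Import all_boot.

Set Implicit Arguments.
Unset Strict Implicit.
Unset Printing Implicit Defensive.

Local Open Scope R_scope.

Section ContinuousGraph.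
Variable V : finType.
Variable e : rel V.

(* A point of the continuous graph P(G) is represented by its barycentric
   coordinate function V -> R: p(u,v,lam) has coordinate 1-lam at u, lam at v
   and 0 elsewhere.  This representation makes the identifications
   p(u,v,lam) = p(v,u,1-lam), p(u,v,0) = u, p(u,v,1) = v hold as equalities. *)
Definition point := V -> R.

Definition pt (u v : V) (lam : R) : point :=
  fun x => if x == u then 1 - lam else if x == v then lam else 0.

Definition vtx (w : V) : point := fun x => if x == w then 1 else 0.

Definition in_PG (p : point) : Prop :=
  exists u v lam, e u v /\ 0 <= lam <= 1 /\ p = pt u v lam.

Definition is_vertex (p : point) : Prop := exists w, p = vtx w.

Definition interior (u v : V) (p : point) : Prop :=
  exists lam, 0 < lam < 1 /\ p = pt u v lam.

Record step := Step { s_u : V; s_v : V; s_from : R; s_to : R }.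

Definition step_src (s : step) : point := pt (s_u s) (s_v s) (s_from s).
Definition step_dst (s : step) : point := pt (s_u s) (s_v s) (s_to s).
Definition step_len (s : step) : R := Rabs (s_from s - s_to s).

Definition step_ok (s : step) : Prop :=
  e (s_u s) (s_v s) /\ 0 <= s_from s <= 1 /\ 0 <= s_to s <= 1 /\
  step_src s <> step_dst s.

Record walk := Walk { w_start : point; w_steps : seq step }.

Definition wz (w : walk) : nat := size (w_steps w).
Definition stops (w : walk) : seq point := w_start w :: map step_dst (w_steps w).
Definition stop (w : walk) (i : nat) : point := nth (w_start w) (stops w) i.
Definition wend (w : walk) : point := last (w_start w) (map step_dst (w_steps w)).

Fixpoint chain (p : point) (ss : seq step) : Prop :=
  match ss with
  | [::] => True
  | s :: ss' => step_ok s /\ step_src s = p /\ chain (step_dst s) ss'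
  end.

Definition is_walk (w : walk) : Prop := in_PG (w_start w) /\ chain (w_start w) (w_steps w).

Definition wlength (w : walk) : R := foldr Rplus 0 (map step_len (w_steps w)).

(* d(p,q) <= r : the minimum length of a walk from p to q is at most r
   (the minimum is attained, so this is: some walk from p to q has length <= r) *)
Definition dist_le (p q : point) (r : R) : Prop :=
  exists w, is_walk w /\ w_start w = p /\ wend w = q /\ wlength w <= r.

Definition is_tour (w : walk) : Prop := is_walk w /\ wend w = w_start w.

Definition on_tour (w : walk) (q : point) : Prop :=
  exists s, List.In s (w_steps w) /\
    exists nu, Rmin (s_from s) (s_to s) <= nu <= Rmax (s_from s) (s_to s) /\
               q = pt (s_u s) (s_v s) nu.

Definition delta_tour (delta : R) (w : walk) : Prop :=
  is_tour w /\ forall p, in_PG p -> exists q, on_tour w q /\ dist_le p q delta.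

Definition shortest_delta_tour (delta : R) (w : walk) : Prop :=
  delta_tour delta w /\ forall w', delta_tour delta w' -> wlength w <= wlength w'.

Definition traverses_at (w : walk) (u v : V) (i : nat) : Prop :=
  (stop w i.-1 = vtx u /\ stop w i = vtx v) \/
  (stop w i.-1 = vtx v /\ stop w i = vtx u).

Definition traverses (w : walk) (u v : V) : Prop :=
  exists i, (1 <= i <= wz w)%N /\ traverses_at w u v i.

Definition nice (w : walk) : Prop :=
  is_tour w /\ (3 <= wz w)%N /\
  (forall i, (1 <= i <= wz w)%N ->
     is_vertex (stop w i.-1) \/ is_vertex (stop w i)) /\
  (forall i, (1 <= i <= wz w)%N -> ~ is_vertex (stop w i) ->
     stop w i.-1 = stop w ((i + 1) %% wz w)) /\
  (forall u v, e u v -> forall i j, (1 <= i <= wz w)%N -> (1 <= j <= wz w)%N ->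
     interior u v (stop w i) -> interior u v (stop w j) -> i = j) /\
  (forall u v, e u v -> traverses w u v ->
     forall i, (i <= wz w)%N -> ~ interior u v (stop w i)) /\
  (forall u v, e u v -> forall i j k,
     (1 <= i)%N -> (i < j)%N -> (j < k)%N -> (k <= wz w)%N ->
     traverses_at w u v i -> traverses_at w u v j -> ~ traverses_at w u v k).

Definition stops_at_3_points (w : walk) : Prop :=
  exists i j k, (i <= wz w)%N /\ (j <= wz w)%N /\ (k <= wz w)%N /\
    stop w i <> stop w j /\ stop w i <> stop w k /\ stop w j <> stop w k.

Definition vertex_cover (C : {set V}) : Prop :=
  forall u v, e u v -> u \in C \/ v \in C.

End ContinuousGraph.

(* S_delta, with x - floor x written frac_part x (Stdlib: x - IZR (Int_part x),
   Int_part = floor) *)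
Definition in_S_delta (delta s : R) : Prop :=
  s = 0 \/ s = frac_part delta \/ s = frac_part (1/2 + delta) \/
  s = frac_part (2 * delta).

Definition adm_delta (delta s : R) : Prop := in_S_delta delta s \/ in_S_delta delta (1 - s).

Definition is_s_delta (delta s : R) : Prop :=
  (exists s1 s2, adm_delta delta s1 /\ adm_delta delta s2 /\ s1 <> s2 /\ s1 <> 1 - s2 /\
                 s = Rabs (s1 - s2)) /\
  (forall s1 s2, adm_delta delta s1 -> adm_delta delta s2 -> s1 <> s2 -> s1 <> 1 - s2 ->
                 s <= Rabs (s1 - s2)).

(* Elements of S_delta show s_delta <= min(1/2, 3/2 - delta).  Cover the graph by one
   vertex x0 at which T stops together with the vertices charged by the steps of T:
   a step of length at least s_delta charges, for each end of its edge that it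
   touches, the opposite end.  Two charges by one step force a full traversal, of
   length 1 >= 2 s_delta, so there are at most l(T)/s_delta charges.  By niceness,
   consecutive vertex stops either coincide (around an excursion into an edge) or are
   the ends of a traversal, so every vertex stop is x0 or charged.  If neither end of
   an edge uv were covered, the tour point q within delta of its midpoint would lie on
   a step of an edge wx whose vertex end w is a stop, so w is neither u nor v.  Since
   delta < 3/2, x is u or v and delta >= 1/2 + (1 - t) with t = d(w, q); hence
   t >= 3/2 - delta >= s_delta and the step charges x. *)

From Stdlib Require Import Reals Lra Classical FunctionalExtensionality.
From mathcomp Require Import all_boot zify.

Set Implicit Arguments.
Unset Strict Implicit.
Unset Printing Implicit Defensive.

Open Scope R_scope.

Lemma is_s_delta_gt0 (delta s : R) : is_s_delta delta s -> 0 < s.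
Proof. by move=> [[s1 [s2 [_ [_ [ne12 [_ ->]]]]]] _]; apply: Rabs_pos_lt; lra. Qed.

Lemma is_s_delta_le_S (delta s h : R) : is_s_delta delta s -> in_S_delta delta h ->
  0 < h < 1 -> s <= h /\ s <= 1 - h.
Proof.
move=> [_ s_min] Sh h01; have S0 : adm_delta delta 0 by left; left.
split.
- have := s_min 0 h S0 (or_introl Sh) ltac:(lra) ltac:(lra).
  by rewrite Rabs_left; lra.
- have Sh' : adm_delta delta (1 - h) by right; have -> : 1 - (1 - h) = h by ring.
  have := s_min 0 (1 - h) S0 Sh' ltac:(lra) ltac:(lra).
  by rewrite Rabs_left; lra.
Qed.

Lemma is_s_delta_bounds (delta s : R) : 0 < delta < 3/2 -> is_s_delta delta s ->
  0 < s /\ s <= 1/2 /\ s <= 3/2 - delta.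
Proof.
move=> delta_bds s_delta; split; first exact: is_s_delta_gt0 s_delta.
have [delta_small | delta_big] := Rle_lt_dec delta (1/2).
- have f_delta : frac_part delta = delta.
    by have [_ <-] := Int_part_frac_part_spec delta 0 delta ltac:(lra) ltac:(simpl IZR; lra).
  have := @is_s_delta_le_S _ _ delta s_delta (or_intror (or_introl (esym f_delta))).
  lra.
- have f_shift : frac_part (1/2 + delta) = delta - 1/2.
    by have [_ <-] := Int_part_frac_part_spec (1/2 + delta) 1 (delta - 1/2) ltac:(lra)
      ltac:(simpl IZR; lra).
  have := @is_s_delta_le_S _ _ (delta - 1/2) s_delta
    (or_intror (or_intror (or_introl (esym f_shift)))).
  lra.
Qed.

Lemma In_nth_index (T : Type) (x : T) (s : seq T) :
  List.In x s -> exists2 i, (i < size s)%N & nth x s i = x.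
Proof.
elim: s => [|y s IH] //= [->|/IH[i i_lt nth_i]]; first by exists 0%N.
by exists i.+1.
Qed.

Section Points.
Variable V : finType.

Lemma vtx_inj : injective (@vtx V).
Proof.
move=> y1 y2 /(f_equal (fun p => p y1)); rewrite /vtx eqxx.
by case: eqP => // _; lra.
Qed.

Lemma pt_sym (a b : V) t : a != b -> pt a b t = pt b a (1 - t).
Proof.
move=> ab; apply: functional_extensionality => x; rewrite /pt.
case: (x =P a) => [->|_]; first by rewrite (negbTE ab); lra.
by case: (x =P b) => // _; lra.
Qed.

Lemma pt_vtx (a b w : V) t : a != b -> pt a b t = vtx w ->
  (t = 0 /\ w = a) \/ (t = 1 /\ w = b).
Proof.
move=> ab E; have Ea := f_equal (fun p => p a) E; have Eb := f_equal (fun p => p b) E.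
move: Ea Eb; rewrite /pt /vtx !eqxx [b == a]eq_sym (negbTE ab) /=.
case: (a =P w) => [->|_] Ea; first by left; split => //; lra.
by case: (b =P w) => [->|_] Eb; [right; split => //|]; lra.
Qed.

(* A lower bound for the distance to the midpoint of uv: it equals |lam - 1/2| at
   p(u,v,lam), 1/2 + t at distance t from u or v on another edge, 3/2 elsewhere. *)
Definition mid_pot (u v : V) (p : point V) : R := 3/2 - p u - p v - Rmin (p u) (p v).

Lemma mid_pot_midpoint (u v : V) : u != v -> mid_pot u v (pt u v (1/2)) = 0.
Proof.
move=> uv; rewrite /mid_pot /pt eqxx eq_sym (negbTE uv) eqxx /Rmin.
by case: Rle_dec; lra.
Qed.

Lemma mid_pot_lipschitz (u v a b : V) t1 t2 : u != v -> a != b ->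
  0 <= t1 <= 1 -> 0 <= t2 <= 1 ->
  mid_pot u v (pt a b t2) - mid_pot u v (pt a b t1) <= Rabs (t1 - t2).
Proof.
move=> uv ab t1_01 t2_01; rewrite /mid_pot /pt.
case: (u =P a) => [Eua|_]; case: (u =P b) => [Eub|_];
case: (v =P a) => [Eva|_]; case: (v =P b) => [Evb|_];
  try (subst; rewrite ?eqxx in uv ab; done);
  rewrite /Rmin; repeat case: Rle_dec; rewrite /Rabs; case: Rcase_abs; lra.
Qed.

Lemma mid_pot_off_edge (u v a b : V) nu : u != v -> a != b -> a != u -> a != v ->
  mid_pot u v (pt a b nu) < 3/2 -> (b = u \/ b = v) /\ 3/2 - nu <= mid_pot u v (pt a b nu).
Proof.
move=> uv ab au av; rewrite /mid_pot /pt [u == a]eq_sym (negbTE au) [v == a]eq_sym (negbTE av).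
case: (u =P b) => [<-|_].
  by rewrite eq_sym (negbTE uv) /Rmin; case: Rle_dec => ? ?; (split; [left | lra]).
by case: (v =P b) => [<-|_]; rewrite /Rmin; case: Rle_dec => ? ?;
  first [lra | split; [right | lra]].
Qed.

End Points.

Section Charges.
Variable V : finType.
Implicit Type st : step V.

Lemma step_lenE st :
  step_len st = Rmax (s_from st) (s_to st) - Rmin (s_from st) (s_to st).
Proof. by rewrite /step_len /Rmax /Rmin /Rabs; case: Rle_dec; case: Rcase_abs; lra. Qed.

(* [Rmin .. <= 0] says that the step touches s_u, [1 <= Rmax ..] that it touches s_v. *)
Definition charged (s : R) st : seq V :=
  if Rle_dec s (step_len st) then
    (if Rle_dec (Rmin (s_from st) (s_to st)) 0 then [:: s_v st] else [::]) ++
    (if Rle_dec 1 (Rmax (s_from st) (s_to st)) then [:: s_u st] else [::])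
  else [::].

Lemma size_charged s st : 0 < s <= 1/2 -> INR (size (charged s st)) * s <= step_len st.
Proof.
move=> s_bds; rewrite /charged step_lenE.
have := Rmin_l (s_from st) (s_to st); have := Rmax_l (s_from st) (s_to st).
by case: Rle_dec => /= ?; [case: Rle_dec => ?; case: Rle_dec => ? /= |]; lra.
Qed.

Lemma size_flatten_charged s (ss : seq (step V)) : 0 < s <= 1/2 ->
  INR (size (flatten [seq charged s st | st <- ss])) * s <=
  foldr Rplus 0 (map (@step_len V) ss).
Proof.
move=> s_bds; elim: ss => [|st ss IH] /=; first lra.
by rewrite size_cat plus_INR; have := size_charged st s_bds; lra.
Qed.

Lemma mem_charged_v s st nu : Rmin (s_from st) (s_to st) <= 0 ->
  s <= nu <= Rmax (s_from st) (s_to st) -> s_v st \in charged s st.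
Proof.
move=> touch_u nu_bds; rewrite /charged step_lenE.
case: Rle_dec => ?; last lra.
case: (Rle_dec (Rmin _ _) 0) => ?; last lra.
by rewrite mem_cat mem_seq1 eqxx.
Qed.

Lemma mem_charged_u s st nu : 1 <= Rmax (s_from st) (s_to st) ->
  Rmin (s_from st) (s_to st) <= nu <= 1 - s -> s_u st \in charged s st.
Proof.
move=> touch_v nu_bds; rewrite /charged step_lenE.
case: Rle_dec => ?; last lra.
case: (Rle_dec 1 _) => ?; last lra.
by rewrite mem_cat mem_seq1 eqxx orbT.
Qed.

Lemma mem_flatten_charged s (ss : seq (step V)) d k x : (k < size ss)%N ->
  x \in charged s (nth d ss k) -> x \in flatten [seq charged s st | st <- ss].
Proof.
move=> k_lt x_in; apply/flattenP; exists (charged s (nth d ss k)) => //.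
by rewrite -(nth_map d [::]) // mem_nth // size_map.
Qed.

End Charges.

Section Walks.
Variables (V : finType) (e : rel V).
Hypothesis e_irr : irreflexive e.

Lemma step_ok_neq (st : step V) : step_ok e st -> s_u st != s_v st.
Proof. by move=> [uv _]; apply: contraTneq uv => ->; rewrite e_irr. Qed.

Lemma mid_pot_chain (u v : V) p ss : u != v -> chain e p ss ->
  mid_pot u v (last p (map (@step_dst V) ss)) - mid_pot u v p <=
  foldr Rplus 0 (map (@step_len V) ss).
Proof.
move=> uv; elim: ss p => [|st ss IH] p /=; first lra.
move=> [st_ok [<- chain_ss]]; have := IH _ chain_ss.
have [_ [from01 [to01 _]]] := st_ok.
have := mid_pot_lipschitz uv (step_ok_neq st_ok) from01 to01.
by rewrite /step_len /step_src /step_dst; lra.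
Qed.

Lemma mid_pot_dist_le (u v : V) p q r : u != v -> dist_le e p q r ->
  mid_pot u v q <= mid_pot u v p + r.
Proof.
move=> uv [w [[_ chain_w] [<- [<- len_w]]]].
by have := mid_pot_chain uv chain_w; rewrite /wend; rewrite /wlength in len_w; lra.
Qed.

Lemma chain_nth_ok p ss d i : chain e p ss -> (i < size ss)%N -> step_ok e (nth d ss i).
Proof.
elim: ss p i => [|st ss IH] p [|i] //= [st_ok [_ chain_ss]] // i_lt.
exact: IH chain_ss i_lt.
Qed.

Lemma chain_nth_src p ss d i : chain e p ss -> (i < size ss)%N ->
  step_src (nth d ss i) = nth p (p :: map (@step_dst V) ss) i.
Proof.
elim: ss p i => [|st ss IH] p [|i] //= [_ [src_st chain_ss]] // i_lt.
rewrite (IH _ _ chain_ss i_lt); case: i i_lt => //= i i_lt.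
by apply: set_nth_default; rewrite size_map; lia.
Qed.

Lemma walk_step_src (w : walk V) d i : is_walk e w -> (i < wz w)%N ->
  step_src (nth d (w_steps w) i) = stop w i.
Proof. by move=> [_ chain_w] /(chain_nth_src d chain_w). Qed.

Lemma walk_step_dst (w : walk V) d i : (i < wz w)%N ->
  step_dst (nth d (w_steps w) i) = stop w i.+1.
Proof. by move=> i_lt; rewrite /stop /stops /= (nth_map d). Qed.

Lemma tour_stop_mod (w : walk V) n : is_tour e w -> (n <= wz w)%N ->
  stop w (n %% wz w) = stop w n.
Proof.
move=> [_ closed_w]; rewrite leq_eqVlt => /orP[/eqP ->|n_lt]; last by rewrite modn_small.
by rewrite modnn /stop /stops /= -[X in nth _ _ X](size_map (@step_dst V)) nth_last.
Qed.

End Walks.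

Section StepCharges.
Variables (V : finType) (e : rel V) (s : R).
Hypothesis e_irr : irreflexive e.

Lemma charged_traversal (st : step V) y1 y2 : s <= 1 -> step_ok e st ->
  step_src st = vtx y1 -> step_dst st = vtx y2 ->
  y1 \in charged s st /\ y2 \in charged s st.
Proof.
case: st => a b fr to s_le1 st_ok; have ab : a != b := step_ok_neq e_irr st_ok.
case: st_ok => [_ [_ [_ src_dst]]]; rewrite /step_src /step_dst /= in src_dst * => src dst.
have [[fr_v y1_v] [to_v y2_v]] : ((fr = 0 \/ fr = 1) /\ (y1 = a \/ y1 = b)) /\
                                 ((to = 0 \/ to = 1) /\ (y2 = a \/ y2 = b)).
  by split; [case: (pt_vtx ab src) | case: (pt_vtx ab dst)] => -[-> ->]; split;
    by [left | right].
have [min0 max1] : Rmin fr to <= 0 /\ 1 <= Rmax fr to.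
  have := Rmin_l fr to; have := Rmax_r fr to; have := Rmin_r fr to; have := Rmax_l fr to.
  case: fr_v => E1; case: to_v => E2; rewrite E1 E2 in src_dst *;
    first [lra | by case: (src_dst erefl)].
have a_in : a \in charged s (Step a b fr to).
  by apply: (@mem_charged_u _ _ _ (Rmin fr to)) => //=; lra.
have b_in : b \in charged s (Step a b fr to).
  by apply: (@mem_charged_v _ _ _ (Rmax fr to)) => //=; lra.
by case: y1_v => ->; case: y2_v => ->; split.
Qed.

Lemma charged_near_midpoint (u v w : V) (st : step V) nu delta :
  u != v -> step_ok e st -> (step_src st = vtx w \/ step_dst st = vtx w) ->
  w != u -> w != v -> Rmin (s_from st) (s_to st) <= nu <= Rmax (s_from st) (s_to st) ->
  mid_pot u v (pt (s_u st) (s_v st) nu) <= delta -> delta < 3/2 -> s <= 3/2 - delta ->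
  u \in charged s st \/ v \in charged s st.
Proof.
case: st => a b fr to uv st_ok; have ab : a != b := step_ok_neq e_irr st_ok.
rewrite /step_src /step_dst /= => w_end wu wv nu_bds near delta_lt s_le.
have [[touch_a Ew]|[touch_b Ew]] :
    (Rmin fr to <= 0 /\ w = a) \/ (1 <= Rmax fr to /\ w = b).
  have := Rmin_l fr to; have := Rmin_r fr to; have := Rmax_l fr to; have := Rmax_r fr to.
  by case: w_end => /(pt_vtx ab) [[-> ->]|[-> ->]]; [left | right | left | right];
    split => //; lra.
all: subst w.
- have [b_uv far] := mid_pot_off_edge (nu := nu) uv ab wu wv ltac:(lra).
  have b_in : b \in charged s (Step a b fr to).
    by apply: (@mem_charged_v _ _ _ nu) => //=; lra.
  by case: b_uv => <-; [left | right].
- rewrite pt_sym // in near; have ba : b != a by rewrite eq_sym.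
  have [a_uv far] := mid_pot_off_edge (nu := 1 - nu) uv ba wu wv ltac:(lra).
  have a_in : a \in charged s (Step a b fr to).
    by apply: (@mem_charged_u _ _ _ nu) => //=; lra.
  by case: a_uv => <-; [left | right].
Qed.

End StepCharges.

Definition tour_cover (V : finType) (s : R) (x0 : V) (T : walk V) : seq V :=
  x0 :: flatten [seq charged s st | st <- w_steps T].

Lemma size_tour_cover (V : finType) (s : R) (x0 : V) (T : walk V) : 0 < s <= 1/2 ->
  INR (size (tour_cover s x0 T)) <= wlength T / s + 1.
Proof.
move=> s_bds; rewrite [size _]/= S_INR; have := size_flatten_charged (w_steps T) s_bds.
rewrite -/(wlength T) => sum_le; apply: Rplus_le_compat_r.
by apply: (Rmult_le_reg_r s); [lra | rewrite /Rdiv Rmult_assoc Rinv_l; lra].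
Qed.

Section NiceTour.
Variables (V : finType) (e : rel V) (T : walk V) (s delta : R) (i0 : nat) (x0 : V).
Hypotheses (e_irr : irreflexive e) (tour_T : is_tour e T).
Hypothesis vertex_end : forall i, (1 <= i <= wz T)%N ->
  is_vertex (stop T i.-1) \/ is_vertex (stop T i).
Hypothesis excursion : forall i, (1 <= i <= wz T)%N -> ~ is_vertex (stop T i) ->
  stop T i.-1 = stop T ((i + 1) %% wz T).
Hypotheses (i0_le1 : (i0 <= 1)%N) (i0_le_z : (i0 <= wz T)%N) (stop_i0 : stop T i0 = vtx x0).
Hypothesis s_le1 : s <= 1.

Local Notation cover := (tour_cover s x0 T).

Lemma charged_sub_tour_cover d k x : (k < wz T)%N ->
  x \in charged s (nth d (w_steps T) k) -> x \in cover.
Proof. by move=> k_lt x_in; rewrite inE (mem_flatten_charged k_lt x_in) orbT. Qed.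

Lemma vertex_stop_in_tour_cover k y : (k <= wz T)%N -> stop T k = vtx y -> y \in cover.
Proof.
have [walk_T _] := tour_T.
have from_i0 n : (i0 <= n <= wz T)%N -> forall x, stop T n = vtx x -> x \in cover.
  elim/ltn_ind: n => n IH /andP[i0_n n_le] x stop_n.
  have [n_i0|n_gt] : n = i0 \/ (i0 < n)%N by lia.
    by rewrite n_i0 stop_i0 in stop_n; rewrite -(vtx_inj stop_n) inE eqxx.
  case: n n_gt IH i0_n n_le stop_n => [//|m] m_gt IH i0_m m_le stop_m.
  have m_lt : (m < wz T)%N by lia.
  have [[x' stop_m_x']|not_vtx] := classic (is_vertex (stop T m)).
    apply: (charged_sub_tour_cover (d := Step x x 0 0) m_lt).
    have st_ok := chain_nth_ok (Step x x 0 0) walk_T.2 m_lt.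
    have [_ //] := charged_traversal e_irr s_le1 st_ok
      (etrans (walk_step_src _ walk_T m_lt) stop_m_x') (etrans (walk_step_dst _ m_lt) stop_m).
  have i0_ne_m : i0 <> m by move=> i0m; apply: not_vtx; exists x0; rewrite -i0m.
  have := excursion (i := m) ltac:(lia) not_vtx.
  rewrite addn1 (tour_stop_mod tour_T m_le) stop_m => stop_back.
  by apply: (IH m.-1) => //; lia.
move=> k_le stop_k; case: (leqP i0 k) => [i0_k|k_lt]; first by apply: (from_i0 k) => //; lia.
have k0 : k = 0%N by lia.
apply: (from_i0 (wz T)); first by lia.
by rewrite -(tour_stop_mod tour_T (leqnn _)) modnn -k0.
Qed.

Hypothesis covering : forall p, in_PG e p -> exists q, on_tour T q /\ dist_le e p q delta.
Hypotheses (delta_lt : delta < 3/2) (s_le : s <= 3/2 - delta).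

Lemma tour_cover_edge u v : e u v -> (u \in cover) || (v \in cover).
Proof.
move=> uv_edge; have uv : u != v by apply: contraTneq uv_edge => ->; rewrite e_irr.
apply/norP => -[u_out v_out]; have [walk_T _] := tour_T.
have mid_in : in_PG e (pt u v (1/2)) by exists u, v, (1/2); do !split => //; lra.
have [q [[st [st_in [nu [nu_bds ->]]]] near]] := covering mid_in.
have near_mid : mid_pot u v (pt (s_u st) (s_v st) nu) <= delta.
  by have := mid_pot_dist_le e_irr uv near; rewrite mid_pot_midpoint //; lra.
have [i i_lt nth_i] := In_nth_index st_in; change (is_true (i < wz T)%N) in i_lt.
have st_ok : step_ok e st by rewrite -nth_i; exact: chain_nth_ok walk_T.2 i_lt.
have [w w_end w_in] : exists2 w, step_src st = vtx w \/ step_dst st = vtx w & w \in cover.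
  rewrite -nth_i (walk_step_src _ walk_T i_lt) (walk_step_dst _ i_lt).
  case: (vertex_end (i := i.+1) ltac:(lia)) => [[w stop_w]|[w stop_w]]; exists w;
    by [left | right | apply: vertex_stop_in_tour_cover stop_w; lia].
have [wu wv] : w != u /\ w != v.
  by split; apply: contraTneq w_in => ->.
have [u_ch|v_ch] :=
  charged_near_midpoint e_irr uv st_ok w_end wu wv nu_bds near_mid delta_lt s_le.
- by move: u_out; rewrite -nth_i in u_ch; rewrite (charged_sub_tour_cover i_lt u_ch).
- by move: v_out; rewrite -nth_i in v_ch; rewrite (charged_sub_tour_cover i_lt v_ch).
Qed.

End NiceTour.

Theorem mainTheorem18 (V : finType) (e : rel V) (delta s : R) (T : walk V) :
  symmetric e -> irreflexive e -> (forall u v, connect e u v) ->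
  0 < delta < 3/2 ->
  shortest_delta_tour e delta T -> nice e T -> stops_at_3_points T ->
  is_s_delta delta s ->
  exists C : {set V}, vertex_cover e C /\
    INR #|C| <= wlength T / s + 1.
Proof.
move=> _ e_irr _ delta_bds [[tour_T covering] _] [_ [z_ge3 [vertex_end [excursion _]]]] _ s_delta.
have [s_gt0 [s_le_half s_le]] := is_s_delta_bounds delta_bds s_delta.
have [i0 i0_le1 [x0 stop_i0]] : exists2 i0, (i0 <= 1)%N & exists x0, stop T i0 = vtx x0.
  by case: (vertex_end 1%N ltac:(lia)); [exists 0%N | exists 1%N].
exists [set x in tour_cover s x0 T]; split.
  move=> u v uv; rewrite !inE; apply/orP.
  apply: (tour_cover_edge e_irr tour_T vertex_end excursion i0_le1 _ stop_i0 _ covering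
    _ s_le uv); by [lia | lra].
apply: Rle_trans (size_tour_cover x0 T (conj s_gt0 s_le_half)).
by apply/le_INR/leP; rewrite cardsE card_size.
Qed.
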